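(* Let $R$ be a noncommutative division algebra over a field $F$, and let $p\in F[x]$ be a nonconstant polynomial. Then there exist elements $\alpha,\beta\in R$ such that $p(\alpha\beta)\neq p(\beta\alpha)$. *)

From HB Require Import structures.
From mathcomp Require Import all_boot all_order all_algebra.
Set Implicit Arguments.
Unset Strict Implicit.
Unset Printing Implicit Defensive.
Import GRing.Theory.
Local Open Scope ring_scope.

Definition division_algebra (F : fieldType) (R : unitAlgType F) : Prop :=
  forall x : R, x != 0 -> x \is a GRing.unit.

(* Suppose p(ab) = p(ba) for all a, b.  Since a p(ba) = p(ab) a, every value p(x) is
   then central.
   If the centre has more than deg p elements, comparing coefficients, in a central
   variable z, of p(xz) and of (x + z)^m produces an m > 0 such that all binomials
   C(m, j), 0 < j < m, vanish in R and every x^m is central.  Then ad x = [x, _] is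
   nilpotent; if it were nonzero it would yield some v with [x, v] = 1, which such an m
   forbids.
   Otherwise the centre is finite and p is at most (deg p)-to-one on commuting elements,
   so commuting subsets of R have bounded size.  For a non-central a, the bicommutant K
   of a is then a finite field, Herstein's lemma gives v != 0 with v a v^-1 in K \ {a},
   v normalizes K and has finite order, and the finite ring K[v] is commutative by
   Wedderburn's theorem, contradicting v a != a v. *)

From HB Require Import structures.
From mathcomp Require Import all_boot all_order all_algebra all_field.
From Stdlib Require Import Classical.
Import GRing.Theory.
Local Open Scope ring_scope.
Set Implicit Arguments. Unset Strict Implicit. Unset Printing Implicit Defensive.

Lemma enum_of_bounded_pred (T : eqType) (P : T -> Prop) (B : nat) :
    (forall s : seq T, uniq s -> {in s, forall x, P x} -> (size s <= B)%N) ->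
  exists s : seq T, uniq s /\ forall x, P x <-> x \in s.
Proof.
move=> boundP.
have [s [us sP maxs]] : exists s : seq T,
    [/\ uniq s, {in s, forall x, P x} & forall x, P x -> x \in s].
  apply: NNPP => nomax.
  suff [s [us sP /eqP size_s]] : exists s : seq T,
      [/\ uniq s, {in s, forall x, P x} & size s == B.+1].
    by have := boundP s us sP; rewrite size_s ltnn.
  elim: B.+1 => [|n [s [us sP /eqP size_s]]]; first by exists [::].
  have [x /(imply_to_and (P x))[Px sx]] : exists x, ~ (P x -> x \in s).
    by apply: not_all_ex_not => maxs; apply: nomax; exists s.
  exists (x :: s); split=> /=; first by rewrite us andbT; apply/negP.
  - by move=> y; rewrite inE => /predU1P[->|/sP].
  - by rewrite size_s.
by exists s; split=> // x; split=> [/maxs|/sP].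
Qed.

Lemma size_le_fibers (T U : eqType) (f : T -> U) (zs : seq U) (L : seq T) (k : nat) :
    {in L, forall x, f x \in zs} -> (forall z, count (fun x => f x == z) L <= k)%N ->
  (size L <= size zs * k)%N.
Proof.
move=> Lzs fiber_le; apply: (@leq_trans (\sum_(z <- zs) count (fun x => f x == z) L)).
  elim: L Lzs {fiber_le} => //= x L IHL Lzs.
  rewrite big_split /= -add1n leq_add //; last by apply: IHL => y Ly; rewrite Lzs ?inE ?Ly ?orbT.
  by rewrite (big_rem (f x)) ?Lzs ?inE ?eqxx //= leq_addr.
by rewrite -sum1_size big_distrl /=; apply: leq_sum => z _; rewrite mul1n.
Qed.

Definition central (R : nzRingType) (z : R) := forall y : R, GRing.comm z y.

Lemma exists_expr_eq1 (R : unitRingType) (x : R) (n : nat) : x \is a GRing.unit ->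
  ~~ uniq (mkseq (GRing.exp x) n) -> exists2 r, (0 < r)%N & x ^+ r = 1.
Proof.
move=> ux /(uniqPn 0)[i [j [lt_ij]]]; rewrite size_mkseq => lt_jn.
rewrite !nth_mkseq ?(ltn_trans lt_ij) // => eq_ij.
exists (j - i)%N; first by rewrite subn_gt0.
by apply: (mulrI (unitrX i ux)); rewrite mulr1 -exprD subnKC ?eq_ij // ltnW.
Qed.

Section DivisionRing.
Variable R : unitRingType.
Hypothesis hdiv : forall x : R, x != 0 -> x \is a GRing.unit.

Lemma commuting_roots_size (Q : {poly R}) (s : seq R) : Q != 0 -> uniq s ->
  {in s &, forall x y, GRing.comm x y} -> {in s, forall x, root Q x} -> (size s < size Q)%N.
Proof.
move=> nzQ us cs rs; apply: max_ring_poly_roots => //; first exact/allP.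
elim: s us cs {rs} => //= x s IHs /andP[xs us] cs.
rewrite IHs ?andbT //; last by move=> u v us' vs'; apply: cs; rewrite inE ?us' ?vs' orbT.
apply/allP => y ys; rewrite /diff_roots.
have -> : x * y = y * x by apply: cs; rewrite inE ?eqxx ?ys ?orbT.
rewrite eqxx hdiv //.
by rewrite subr_eq0; apply: contraNneq xs => <-.
Qed.

Lemma seq_divring_closed (S : seq R) : subring_closed (mem S) -> divring_closed (mem S).
Proof.
move=> [S1 SB SM]; split=> // u v uS vS; rewrite SM //.
have S0 : 0 \in S by rewrite -(subrr 1) SB.
have [-> | nz_v] := eqVneq v 0; first by rewrite invr0.
have vXS i : v ^+ i \in S by elim: i => [|i IHi]; rewrite ?expr0 // exprS SM.
have [r r_gt0 vr1] : exists2 r, (0 < r)%N & v ^+ r = 1.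
  apply: (exists_expr_eq1 (hdiv nz_v) (n := (size S).+1)); apply/negP => uvX.
  suff : ((size S).+1 <= size S)%N by rewrite ltnn.
  by rewrite -[X in (X <= _)%N](size_mkseq (GRing.exp v)) uniq_leq_size // => _ /mapP[i _ ->].
by rewrite -[v^-1]mulr1 -vr1 -(prednK r_gt0) exprS mulKr ?hdiv.
Qed.

End DivisionRing.

Record divring_seq (R : unitRingType) :=
  DivringSeq { dseq :> seq R; dseq_closed : divring_closed (mem dseq) }.

HB.instance Definition _ (R : unitRingType) (D : divring_seq R) :=
  GRing.SubChoice_isSubUnitRing.Build R _ (seq_sub D) (dseq_closed D).

Section FiniteSubdivring.
Variable R : unitRingType.
Hypothesis hdiv : forall x : R, x != 0 -> x \is a GRing.unit.
Variable D : divring_seq R.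

Lemma divring_seq_domain : GRing.integral_domain_axiom (seq_sub D).
Proof.
move=> x y /(congr1 val); rewrite rmorphM rmorph0 => xy0.
apply/orP; have [x0 | nz_x] := eqVneq (val x) 0; [left | right]; apply/eqP/val_inj => //=.
by rewrite -(mulKr (hdiv nz_x) (val y)) xy0 mulr0.
Qed.

Lemma divring_seq_commr : {in dseq D &, forall x y, GRing.comm x y}.
Proof.
move=> x y xD yD.
by have /(congr1 val) := finDomain_mulrC divring_seq_domain (SeqSub xD) (SeqSub yD).
Qed.

Definition divring_seq_field : finFieldType := FinDomainFieldType divring_seq_domain.

End FiniteSubdivring.

Section LeftRightAction.
Variables (R : nzRingType) (K : fieldType) (phi : {rmorphism K -> R}) (a : R).

Implicit Types (P Q : {poly K}) (c : K) (y : R).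

(* The action of {poly K} on R in which constants act by left multiplication through
   phi and 'X acts by right multiplication by a. *)
Definition horner_lr P y := \sum_(i < size P) phi P`_i * y * a ^+ i.

Lemma horner_lr_wide n P y : (size P <= n)%N ->
  horner_lr P y = \sum_(i < n) phi P`_i * y * a ^+ i.
Proof.
move=> le_Pn; rewrite /horner_lr (big_ord_widen n (fun i => phi P`_i * y * a ^+ i)) //.
rewrite big_mkcond; apply: eq_bigr => i _; case: ltnP => // le_Pi.
by rewrite nth_default // rmorph0 !mul0r.
Qed.

Lemma horner_lrD P Q y : horner_lr (P + Q) y = horner_lr P y + horner_lr Q y.
Proof.
pose n := maxn (size P) (size Q).
rewrite !(@horner_lr_wide n) ?leq_maxl ?leq_maxr ?(leq_trans (size_polyD _ _)) //.
by rewrite -big_split; apply: eq_bigr => i _; rewrite coefD rmorphD !mulrDl.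
Qed.

Lemma horner_lrN P y : horner_lr (- P) y = - horner_lr P y.
Proof.
by rewrite /horner_lr size_polyN -sumrN; apply: eq_bigr => i _; rewrite coefN rmorphN !mulNr.
Qed.

Lemma horner_lrC c y : horner_lr c%:P y = phi c * y.
Proof. by rewrite (@horner_lr_wide 1) ?size_polyC ?leq_b1 // big_ord1 coefC mulr1. Qed.

Lemma horner_lrMX P y : horner_lr (P * 'X) y = horner_lr P y * a.
Proof.
rewrite (@horner_lr_wide (size P).+1); last first.
  by rewrite (leq_trans (size_polyMleq _ _)) // size_polyX addn2.
rewrite big_ord_recl coefMX eqxx rmorph0 !mul0r add0r /horner_lr mulr_suml.
by apply: eq_bigr => i _; rewrite coefMX exprSr mulrA.
Qed.

Lemma horner_lrCM c P y : horner_lr (c%:P * P) y = phi c * horner_lr P y.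
Proof.
rewrite (@horner_lr_wide (size P)) ?mul_polyC ?size_scale_leq // /horner_lr mulr_sumr.
by apply: eq_bigr => i _; rewrite coefZ rmorphM !mulrA.
Qed.

Lemma horner_lrM P Q y : horner_lr (P * Q) y = horner_lr P (horner_lr Q y).
Proof.
elim/poly_ind: P => [|P c IHP]; first by rewrite mul0r /horner_lr size_poly0 !big_ord0.
by rewrite mulrDl mulrAC !horner_lrD !horner_lrMX IHP horner_lrCM horner_lrC.
Qed.

Lemma horner_lrXn n y : horner_lr 'X^n y = y * a ^+ n.
Proof.
elim: n => [|n IHn]; first by rewrite expr0 -polyC1 horner_lrC rmorph1 mul1r mulr1.
by rewrite exprSr horner_lrMX IHn exprSr mulrA.
Qed.

Lemma horner_lrXsubC c y : horner_lr ('X - c%:P) y = y * a - phi c * y.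
Proof. by rewrite horner_lrD horner_lrN horner_lrC -['X]expr1 horner_lrXn. Qed.

Lemma horner_lr_prod_XsubC_eq0 (s : seq K) (w : R) : w != 0 ->
    horner_lr (\prod_(c <- s) ('X - c%:P)) w = 0 ->
  exists2 mu, mu \in s & exists2 v, v != 0 & v * a = phi mu * v.
Proof.
elim: s w => [|c s IHs] w nz_w.
  by rewrite big_nil -polyC1 horner_lrC rmorph1 mul1r => w0; rewrite w0 eqxx in nz_w.
rewrite big_cons horner_lrM horner_lrXsubC.
set v := horner_lr _ w; have [v0 _ | nz_v /eqP] := eqVneq v 0.
  by have [mu smu] := IHs w nz_w v0; exists mu; rewrite ?inE ?smu ?orbT.
by rewrite subr_eq0 => /eqP vac; exists c; rewrite ?inE ?eqxx //; exists v.
Qed.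

End LeftRightAction.

Lemma herstein_conjugate (R : nzRingType) (K : finFieldType) (phi : {rmorphism K -> R})
    (k : K) (b : R) : phi k * b != b * phi k ->
  exists2 mu : K, mu != k & exists2 v : R, v != 0 & v * phi k = phi mu * v.
Proof.
move=> nc_kb.
have : horner_lr phi (phi k) ('X^#|K| - 'X) b = 0.
  by rewrite horner_lrD horner_lrN -['X]expr1 !horner_lrXn -rmorphXn expf_card subrr.
rewrite finField_genPoly (bigD1 k) //= mulrC horner_lrM horner_lrXsubC -big_filter.
case/horner_lr_prod_XsubC_eq0; first by rewrite subr_eq0 eq_sym.
by move=> mu; rewrite mem_filter => /andP[nk _]; exists mu.
Qed.

Definition bicommutant (R : nzRingType) (a k : R) := forall c, GRing.comm a c -> GRing.comm k c.

Section BoundedCommutingSets.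
Variables (R : unitRingType) (N : nat).
Hypothesis hdiv : forall x : R, x != 0 -> x \is a GRing.unit.
Hypothesis commuting_bound : forall L : seq R,
  uniq L -> {in L &, forall x y, GRing.comm x y} -> (size L <= N)%N.

Lemma bounded_exists_expr_eq1 (v : R) : v != 0 -> exists2 r, (0 < r)%N & v ^+ r = 1.
Proof.
move=> nz_v; apply: (exists_expr_eq1 (hdiv nz_v) (n := N.+1)); apply/negP => uvX.
suff : (N.+1 <= N)%N by rewrite ltnn.
rewrite -[X in (X <= _)%N](size_mkseq (GRing.exp v)) commuting_bound //.
by move=> _ _ /mapP[i _ ->] /mapP[j _ ->]; rewrite /GRing.comm -!exprD addnC.
Qed.

Section Bicommutant.
Variable a : R.

Lemma bicommutant_comm k l : bicommutant a k -> bicommutant a l -> GRing.comm k l.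
Proof. by move=> ak al; apply/ak/esym/al. Qed.

Lemma bicommutant_enum : exists Ka : seq R, uniq Ka /\ forall k, bicommutant a k <-> k \in Ka.
Proof.
apply: (enum_of_bounded_pred (B := N)) => s us sa; apply: commuting_bound => // x y xs ys.
exact: bicommutant_comm (sa x xs) (sa y ys).
Qed.

Variable Ka : seq R.
Hypothesis KaP : forall k, bicommutant a k <-> k \in Ka.

Lemma bicommutant_subring_closed : subring_closed (mem Ka).
Proof.
split=> [|k l /KaP ak /KaP al|k l /KaP ak /KaP al]; apply/KaP => c ac.
- by rewrite /GRing.comm mul1r mulr1.
- by rewrite /GRing.comm mulrBl mulrBr ak ?al.
- by rewrite /GRing.comm -mulrA al // !mulrA ak.
Qed.

Lemma bicommutant_self : a \in Ka. Proof. exact/KaP. Qed.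

Definition bicommutant_divring := DivringSeq (seq_divring_closed hdiv bicommutant_subring_closed).

Section Normalizer.
Variables (m v : R).
Hypotheses (mKa : m \in Ka) (nz_v : v != 0) (va : v * a = m * v).

Let uv : v \is a GRing.unit := hdiv nz_v.

Lemma conj_bicommutant k : k \in Ka -> v * k / v \in Ka.
Proof.
move=> /KaP ak; apply/KaP => c ac.
(* v^-1 c v commutes with a because v a v^-1 = m commutes with c. *)
have am : a / v = v^-1 * m by apply: (mulrI uv); rewrite mulrA va mulrK ?mulVKr.
have mc : GRing.comm m c by move/KaP: mKa; apply.
pose c' := v^-1 * c * v.
have kc' : GRing.comm k c'.
  apply: ak; rewrite /GRing.comm /c' !mulrA am -(mulrA _ m c) mc !mulrA.
  by rewrite -(mulrA _ m v) -va !mulrA.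
have -> : c = v * c' / v by rewrite /c' !mulrA mulrV // mul1r mulrK.
clearbody c'.
by rewrite /GRing.comm !mulrA !mulrVK // -(mulrA v k) kc' !mulrA.
Qed.

Lemma conjX_bicommutant i k : k \in Ka -> v ^+ i * k / v ^+ i \in Ka.
Proof.
move=> kKa; elim: i => [|i IHi]; first by rewrite expr0 mul1r invr1 mulr1.
by have := conj_bicommutant IHi; rewrite exprS invrM ?unitrX // !mulrA.
Qed.

Section FiniteOrder.
Variable r : nat.
Hypotheses (r_gt0 : (0 < r)%N) (vr1 : v ^+ r = 1).

Local Notation K := (seq_sub bicommutant_divring).

(* The ring K[v], finite because v has finite order and normalizes K. *)
Definition Kv_combination (f : {ffun 'I_r -> K}) := \sum_(j < r) val (f j) * v ^+ j.

Definition Kv := [seq Kv_combination f | f <- enum {ffun 'I_r -> K}].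

Lemma Kv_combinationP f : Kv_combination f \in Kv.
Proof. by apply: map_f; rewrite mem_enum. Qed.

Lemma Kv_monomial k n : k \in Ka -> k * v ^+ n \in Kv.
Proof.
move=> kKa; pose j0 := Ordinal (ltn_pmod n r_gt0).
pose f := [ffun j => if j == j0 then SeqSub (kKa : k \in dseq bicommutant_divring) else 0].
suff -> : k * v ^+ n = Kv_combination f by apply: Kv_combinationP.
rewrite /Kv_combination (bigD1 j0) //= ffunE eqxx big1 ?addr0 => [|j /negPf nj0].
  by rewrite {1}(divn_eq n r) exprD mulnC exprM vr1 expr1n mul1r.
by rewrite ffunE nj0 /= mul0r.
Qed.

Lemma Kv_sub : {in Kv &, forall x y, x - y \in Kv}.
Proof.
move=> _ _ /mapP[f _ ->] /mapP[g _ ->].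
suff -> : Kv_combination f - Kv_combination g = Kv_combination [ffun j => f j - g j].
  exact: Kv_combinationP.
by rewrite /Kv_combination -sumrB; apply: eq_bigr => j _; rewrite ffunE rmorphB mulrBl.
Qed.

Lemma Kv_sum (I : finType) (F : I -> R) : (forall i, F i \in Kv) -> \sum_i F i \in Kv.
Proof.
have Kv0 : 0 \in Kv.
  have := Kv_combinationP [ffun => 0].
  by rewrite /Kv_combination big1 // => j _; rewrite ffunE /= mul0r.
move=> KvF; apply: (big_ind (fun x => x \in Kv)) => // x y xKv yKv.
by rewrite -[y]opprK -[- y]sub0r; apply: Kv_sub => //; apply: Kv_sub.
Qed.

Lemma Kv_subring_closed : subring_closed (mem Kv).
Proof.
have [Ka1 _ KaM] := bicommutant_subring_closed.
split; [by rewrite -[1]mulr1 -(expr0 v) Kv_monomial | exact: Kv_sub |].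
move=> _ _ /mapP[f _ ->] /mapP[g _ ->].
rewrite /Kv_combination mulr_suml; apply: Kv_sum => i; rewrite mulr_sumr; apply: Kv_sum => j.
set k := val (f i); set l := val (g j).
have -> : k * v ^+ i * (l * v ^+ j) = k * (v ^+ i * l / v ^+ i) * v ^+ (i + j).
  by rewrite exprD !mulrA mulrVK ?unitrX.
by rewrite Kv_monomial // KaM ?conjX_bicommutant ?ssvalP.
Qed.

Lemma normalizer_comm : GRing.comm a v.
Proof.
have [Ka1 _ _] := bicommutant_subring_closed.
have aKv : a \in Kv by rewrite -[a]mulr1 -(expr0 v) Kv_monomial ?bicommutant_self.
have vKv : v \in Kv by rewrite -[v]mul1r -(expr1 v) Kv_monomial.
exact: (divring_seq_commr hdiv (D := DivringSeq (seq_divring_closed hdiv Kv_subring_closed))).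
Qed.

End FiniteOrder.

Lemma normalizer_eq : m = a.
Proof.
have [r r_gt0 vr1] := bounded_exists_expr_eq1 nz_v.
by apply: (mulIr uv); rewrite -va (normalizer_comm r_gt0 vr1).
Qed.

End Normalizer.
End Bicommutant.

Theorem bounded_commuting_comm (x y : R) : GRing.comm x y.
Proof.
apply/eqP; apply: contraT => nxy.
have [Ka [_ KaP]] := bicommutant_enum x.
pose K := divring_seq_field hdiv (bicommutant_divring KaP).
have [mu nmu [v nz_v va]] := herstein_conjugate (phi := (val : K -> R) : {rmorphism K -> R})
  (k := SeqSub (bicommutant_self KaP)) nxy.
by case/eqP: nmu; apply/val_inj/(normalizer_eq KaP (ssvalP mu) nz_v).
Qed.

End BoundedCommutingSets.

Lemma iter_mulD (R : nzRingType) (a b y : R) n :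
  iter n (fun x => a * x + x * b) y = \sum_(i < n.+1) a ^+ (n - i) * y * b ^+ i *+ 'C(n, i).
Proof.
elim: n => [|n IHn]; first by rewrite big_ord1 !expr0 mul1r mulr1.
pose t i := a ^+ (n.+1 - i) * y * b ^+ i.
have left_mul : a * (\sum_(i < n.+1) a ^+ (n - i) * y * b ^+ i *+ 'C(n, i)) =
    \sum_(i < n.+2) t i *+ 'C(n, i).
  rewrite [RHS]big_ord_recr /= bin_small // mulr0n addr0 mulr_sumr.
  by apply: eq_bigr => i _; rewrite mulrnAr !mulrA -exprS /t subSn // -ltnS.
have right_mul : (\sum_(i < n.+1) a ^+ (n - i) * y * b ^+ i *+ 'C(n, i)) * b =
    \sum_(i < n.+1) t i.+1 *+ 'C(n, i).
  by rewrite mulr_suml; apply: eq_bigr => i _; rewrite mulrnAl -mulrA -exprSr.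
rewrite iterS IHn left_mul right_mul big_ord_recl [RHS]big_ord_recl -addrA -big_split /=.
congr (_ + _); first by rewrite !bin0.
by apply: eq_bigr => i _; rewrite /bump /= add1n binS mulrnDr addrC.
Qed.

Definition ad (R : nzRingType) (a y : R) := a * y - y * a.

Lemma iter_last_nonzero (T : eqType) (f : T -> T) (z y : T) n :
  f y != z -> iter n f (f y) = z -> exists2 u, f u != z & f (f u) = z.
Proof.
elim: n y => [|n IHn] y fy; first by move/eqP; rewrite (negPf fy).
have [ffy | nffy] := eqVneq (f (f y)) z; first by exists y.
by rewrite iterSr; apply: IHn.
Qed.

Section CentralFrobeniusPower.
Variables (R : unitRingType) (m : nat).
Hypothesis hdiv : forall x : R, x != 0 -> x \is a GRing.unit.
Hypotheses (m_gt0 : (0 < m)%N) (binom_m0 : forall j, (0 < j < m)%N -> 'C(m, j)%:R = 0 :> R).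

Lemma binomial_sum_frobenius (F : nat -> R) : \sum_(i < m.+1) F i *+ 'C(m, i) = F 0%N + F m.
Proof.
have [n mE] : exists n, m = n.+1 by exists m.-1; rewrite prednK.
rewrite [in LHS]mE big_ord_recl big_ord_recr /= /bump /= !add1n -mE bin0 binn.
rewrite big1 ?add0r // => i _.
by rewrite -mulr_natr binom_m0 ?mulr0 // mE ltnS ltn_ord.
Qed.

Lemma exprD_frobenius (u v : R) : GRing.comm u v -> (u + v) ^+ m = u ^+ m + v ^+ m.
Proof.
move=> uv; rewrite exprDn_comm // (binomial_sum_frobenius (fun i => u ^+ (m - i) * v ^+ i)).
by rewrite subn0 subnn !expr0 mulr1 mul1r.
Qed.

Hypothesis central_expr : forall x : R, central (x ^+ m).

Lemma iter_ad_frobenius (a y : R) : iter m (ad a) y = 0.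
Proof.
have signm : (-1) ^+ m = -1 :> R.
  have := exprD_frobenius (commrN1 1); rewrite subrr expr0n eqn0Ngt m_gt0 expr1n.
  by move=> /esym/eqP; rewrite addrC addr_eq0 => /eqP.
rewrite (@eq_iter _ _ (fun x => a * x + x * - a)) => [|x]; last by rewrite mulrN.
rewrite iter_mulD (binomial_sum_frobenius (fun i => a ^+ (m - i) * y * (- a) ^+ i)).
by rewrite subn0 subnn !expr0 mulr1 mul1r exprNn signm mulN1r mulrN central_expr subrr.
Qed.

Lemma commutator_neq1 (a v : R) : ad a v != 1.
Proof.
apply/eqP => av1; pose b := v * a.
have ab : a * b = (b + 1) * a by rewrite /b mulrA -av1 /ad addrC subrK.
have abn n : a * b ^+ n = (b + 1) ^+ n * a.
  elim: n => [|n IHn]; first by rewrite !expr0 mul1r mulr1.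
  by rewrite exprS mulrA ab -mulrA IHn mulrA -exprS.
have := abn m; rewrite exprD_frobenius ?expr1n; last exact: commr1.
rewrite mulrDl mul1r => /eqP; rewrite -subr_eq0 [b ^+ m * a]central_expr.
rewrite opprD addrA subrr sub0r oppr_eq0 => /eqP a0.
by move: av1; rewrite a0 /ad mul0r mulr0 subrr => /eqP; rewrite eq_sym oner_eq0.
Qed.

Theorem central_frobenius_power_comm (x y : R) : GRing.comm x y.
Proof.
apply/eqP; rewrite -subr_eq0 -/(ad x y); apply: contraT => nxy.
(* ad x is nilpotent, so some w = ad x u != 0 commutes with x; then ad x (w^-1 u) = 1. *)
have [u nz_w w_comm] : exists2 u, ad x u != 0 & ad x (ad x u) = 0.
  by apply: (iter_last_nonzero (n := m.-1) nxy); rewrite -iterSr prednK // iter_ad_frobenius.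
set w := ad x u in nz_w w_comm.
have xw : GRing.comm x w by apply/eqP; rewrite -subr_eq0 -/(ad x w) w_comm.
have xw' : GRing.comm x w^-1 := commrV xw.
case/eqP: (commutator_neq1 x (w^-1 * u)).
by rewrite /ad mulrA xw' -!mulrA -mulrBr -/(ad x u) mulVr ?hdiv.
Qed.

End CentralFrobeniusPower.

Section CentralPoints.
Variable R : unitRingType.
Hypothesis hdiv : forall x : R, x != 0 -> x \is a GRing.unit.

Lemma central_commKl (u x y : R) : central u -> u != 0 ->
  GRing.comm (u * x) y -> GRing.comm x y.
Proof.
move=> cu nz_u uxy; apply: (mulrI (hdiv nz_u)).
by rewrite mulrA uxy mulrA -(cu y) -mulrA.
Qed.

Variable zs : seq R.
Hypotheses (zs_uniq : uniq zs) (zs_central : {in zs, forall z, central z}).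

Lemma coef_comm_of_central_eval (c : {poly R}) (y : R) : (size c <= size zs)%N ->
  {in zs, forall z, GRing.comm c.[z] y} -> forall i, GRing.comm c`_i y.
Proof.
move=> le_c_zs cy i.
pose Q := \poly_(i < size c) (c`_i * y - y * c`_i).
suff /(congr1 (fun P : {poly R} => P`_i)) : Q = 0.
  rewrite coef0 coef_poly; case: ltnP => [_ /eqP|le_ci _]; first by rewrite subr_eq0 => /eqP.
  by rewrite /GRing.comm nth_default // mul0r mulr0.
apply/eqP; apply: contraTT le_c_zs => nzQ; rewrite -ltnNge.
apply: leq_trans (size_poly _ _).
apply: (commuting_roots_size hdiv nzQ zs_uniq) => [u v uzs _|z zzs]; first exact: zs_central.
rewrite /root horner_poly (_ : \sum_(j < size c) _ = c.[z] * y - y * c.[z]).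
  by rewrite (cy z zzs) subrr.
rewrite horner_coef mulr_suml mulr_sumr -sumrB; apply: eq_bigr => j _.
by rewrite mulrBl -!mulrA (commrX j (esym (zs_central zzs y))).
Qed.

Lemma central_lead_expr (q : {poly R}) : (0 < size q)%N -> (size q <= size zs)%N ->
    (forall i, central q`_i) -> (forall x, central q.[x]) ->
  forall x : R, central (x ^+ (size q).-1).
Proof.
move=> q_gt0 le_q_zs cq qc x y.
pose c := \poly_(i < size q) (q`_i * x ^+ i).
have := coef_comm_of_central_eval (c := c) (y := y) _ _ (size q).-1.
rewrite coef_poly prednK // leqnn => /(_ _ _)/central_commKl; apply => //.
- by rewrite -lead_coefE lead_coef_eq0 -size_poly_gt0.
- exact: leq_trans (size_poly _ _) le_q_zs.
move=> z zzs; rewrite horner_poly (_ : \sum_(i < size q) _ = q.[x * z]); first exact: qc.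
rewrite horner_coef; apply: eq_bigr => i _.
by rewrite exprMn_comm -?mulrA //; apply/esym/zs_central.
Qed.

Lemma central_expr_binomial m j : (m < size zs)%N -> (forall x : R, central (x ^+ m)) ->
  'C(m, j)%:R != 0 :> R -> forall x : R, central (x ^+ (m - j)).
Proof.
move=> lt_m_zs cm nz_C x y.
have le_jm : (j <= m)%N by rewrite leqNgt; apply: contra nz_C => /bin_small ->.
pose c := \poly_(i < m.+1) (x ^+ (m - i) *+ 'C(m, i)).
have := coef_comm_of_central_eval (c := c) (y := y) _ _ j.
rewrite coef_poly ltnS le_jm -mulr_natl => /(_ _ _)/central_commKl; apply => //.
- by move=> u; rewrite /GRing.comm commr_nat.
- exact: leq_trans (size_poly _ _) lt_m_zs.
move=> z zzs; rewrite horner_poly (_ : \sum_(i < m.+1) _ = (x + z) ^+ m); first exact: cm.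
rewrite exprDn_comm; last exact/esym/zs_central.
by apply: eq_bigr => i _; rewrite mulrnAl.
Qed.

Lemma exists_central_frobenius_power n : (0 < n < size zs)%N ->
    (forall x : R, central (x ^+ n)) ->
  exists m, [/\ (0 < m)%N, forall j, (0 < j < m)%N -> 'C(m, j)%:R = 0 :> R
              & forall x : R, central (x ^+ m)].
Proof.
elim/ltn_ind: n => n IHn /andP[n_gt0 lt_n_zs] cn.
case: (pickP [pred j : 'I_n | (0 < j)%N && ('C(n, j)%:R != 0 :> R)]) => [j|C0].
  case/andP=> j_gt0 nz_C; apply: (IHn (n - j)%N); last exact: central_expr_binomial.
    by rewrite ltn_subrL j_gt0.
  by rewrite subn_gt0 ltn_ord (leq_ltn_trans (leq_subr _ _)).
exists n; split=> // j /andP[j_gt0 lt_jn].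
by apply/eqP; move: (C0 (Ordinal lt_jn)); rewrite /= j_gt0 => /negbFE.
Qed.

Theorem central_valued_poly_comm_large_center (q : {poly R}) :
    (1 < size q)%N -> (size q <= size zs)%N ->
    (forall i, central q`_i) -> (forall x, central q.[x]) ->
  forall x y : R, GRing.comm x y.
Proof.
move=> q_gt1 le_q_zs cq qc.
have q_gt0 := ltnW q_gt1.
have deg_q : (0 < (size q).-1 < size zs)%N.
  by rewrite -ltnS prednK // q_gt1 (leq_trans _ le_q_zs) // ltn_predL.
have [m [m_gt0 binom_m0 cm]] := exists_central_frobenius_power deg_q
  (central_lead_expr q_gt0 le_q_zs cq qc).
exact: central_frobenius_power_comm hdiv m_gt0 binom_m0 cm.
Qed.

End CentralPoints.

Lemma mulr_expr_swap (R : nzRingType) (a b : R) n : a * (b * a) ^+ n = (a * b) ^+ n * a.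
Proof.
elim: n => [|n IHn]; first by rewrite !expr0 mulr1 mul1r.
by rewrite exprSr mulrA IHn -mulrA exprSr -!mulrA.
Qed.

Section CentralValuedPolynomial.
Variable R : unitRingType.
Hypothesis hdiv : forall x : R, x != 0 -> x \is a GRing.unit.
Variable q : {poly R}.
Hypotheses (q_gt1 : (1 < size q)%N) (central_coef : forall i, central q`_i).

Lemma horner_mul_swap (a b : R) : a * q.[b * a] = q.[a * b] * a.
Proof.
rewrite !horner_coef mulr_sumr mulr_suml; apply: eq_bigr => i _.
by rewrite mulrA -central_coef -!mulrA mulr_expr_swap.
Qed.

Lemma central_horner_of_swap : (forall a b : R, q.[a * b] = q.[b * a]) ->
  forall x : R, central q.[x].
Proof.
move=> q_swap x y; have [-> | nz_y] := eqVneq y 0; first by rewrite /GRing.comm mulr0 mul0r.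
have := horner_mul_swap y (y^-1 * x); rewrite mulVKr ?hdiv // /GRing.comm => <-.
by rewrite -q_swap mulVKr ?hdiv.
Qed.

Lemma central_valued_commuting_bound (zc : seq R) :
    (forall z, central z <-> z \in zc) -> (forall x, central q.[x]) ->
  forall L : seq R, uniq L -> {in L &, forall x y, GRing.comm x y} ->
  (size L <= size zc * (size q).-1)%N.
Proof.
move=> zcP qc L uL cL; apply: (size_le_fibers (f := horner q)) => [x _ | z]; first exact/zcP.
have size_qz : size (q - z%:P) = size q.
  by rewrite size_polyDl // size_polyN (leq_ltn_trans (size_polyC_leq1 z)).
rewrite -size_filter -ltnS prednK ?(ltnW q_gt1) // -size_qz.
apply: commuting_roots_size; rewrite ?filter_uniq -?size_poly_gt0 ?size_qz ?(ltnW q_gt1) //.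
- by move=> u v; rewrite !mem_filter => /andP[_ u_in] /andP[_ v_in]; apply: cL.
- by move=> u; rewrite mem_filter /root !hornerE => /andP[/eqP-> _]; rewrite subrr.
Qed.

Theorem central_valued_poly_comm :
  (forall x : R, central q.[x]) -> forall x y : R, GRing.comm x y.
Proof.
move=> qc.
have [[zs [zs_uniq zs_central le_q_zs]] | small_center] := classic (exists zs : seq R,
    [/\ uniq zs, {in zs, forall z, central z} & (size q <= size zs)%N]).
  exact: (central_valued_poly_comm_large_center hdiv zs_uniq zs_central q_gt1 le_q_zs
    central_coef qc).
have [zc [_ zcP]] : exists zc : seq R, uniq zc /\ forall z, central z <-> z \in zc.
  apply: (enum_of_bounded_pred (B := (size q).-1)) => s us cs.
  rewrite -ltnS prednK ?(ltnW q_gt1) // ltnNge; apply/negP => le_q_s.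
  by apply: small_center; exists s.
exact: bounded_commuting_comm hdiv (central_valued_commuting_bound zcP qc).
Qed.

End CentralValuedPolynomial.

Theorem theorem2p2 (F : fieldType) (R : unitAlgType F)
    (hdiv : division_algebra R)
    (hnoncomm : exists a b : R, a * b != b * a)
    (p : {poly F}) (hp : (1 < size p)%N) :
  exists alpha beta : R, horner_alg (alpha * beta) p != horner_alg (beta * alpha) p.
Proof.
apply: NNPP => no_alpha_beta; have [x [y /eqP nxy]] := hnoncomm; apply: nxy.
pose q := map_poly (in_alg R) p.
have q_gt1 : (1 < size q)%N by rewrite size_map_poly.
have central_coef i : central q`_i by move=> z; rewrite coef_map; apply: comm_alg.
apply: (central_valued_poly_comm hdiv q_gt1 central_coef).
apply: (central_horner_of_swap hdiv central_coef) => a b.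
by apply/eqP; apply: contraT => nab; case: no_alpha_beta; exists a, b.
Qed.
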